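(* Let $R$ be a unital commutative Hausdorff topological $\mathbb Q$-algebra with dense group of units which is locally $k_\omega$, let $E,F\in\mathrm{TopSMod}^{lko}_R$, let $U\subset E_\infty$ be DeWitt-open and let $f:U\to F_\infty$ be grounded and $\lambda^\infty$-smooth, with associated maps $f^{(k)}$. Then for all $x\in U$ and $y\in E_\infty^+$, $$f(x+y)=\sum_{k=0}^\infty\frac1{k!}\,f^{(k)}(x)(y,\dots,y)$$ (with $k$ arguments $y$ in the $k$-th term; only finitely many terms are nonzero).
   Context: $\lambda^n=R[\theta_1,\dots,\theta_n]$, $\lambda^\infty=R[\theta_i:i\in\mathbb N]$ Grassmann algebras on odd generators ($\lambda^n=\bigoplus_IR\theta_I$ product topology, $\lambda^\infty$ direct limit); $\varepsilon:\lambda\to R$ kills all $\theta_i$, $\lambda^{\infty+}=\ker\varepsilon$. For a Hausdorff graded topological $R$-module $E=E_0\oplus E_1$: $E\otimes\lambda^N=\prod_{|I|\le N}E\theta_I$, $E\otimes\lambda^\infty=\varinjlim E\otimes\lambda^N$ in Top, $E_\infty=(E\otimes\lambda^\infty)_0$, $E_\infty^+=(E\otimes\lambda^{\infty+})_0$, $\underline E(\lambda^\infty\theta_p)=(E\otimes\lambda^\infty\theta_p)_0$. $\mathrm{TopSMod}^{lko}_R$: such $E$ which are locally $k_\omega$ (Hausdorff, every point with an open neighbourhood which is a topological direct limit of an increasing sequence of compact sets). DeWitt topology on $E_\infty$ (resp. $E\otimes\lambda^\infty$): coarsest topology making $\mathrm{id}\otimes\varepsilon$ to $E_0$ (resp.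 $E$) continuous. $U_R=U\cap E_0$; $f$ grounded means $f(U_R)\subset F_0$. $\lambda^\infty$-smooth: $f$ is DeWitt-continuous, $f_R=f|_{U_R}:U_R\to F_0$ is $\mathcal C^\infty$ over $R$ (Bertram–Glöckner–Neeb: $g(x+tv)-g(x)=t\,g^{[1]}(x,v,t)$ with continuous $g^{[1]}$, iterated), and there are DeWitt-continuous maps $f^{(k)}:U\times(E\otimes\lambda^\infty)^k\to F\otimes\lambda^\infty$, $k\ge1$ (and $f^{(0)}=f$), such that: (i) for $x\in U$, $f^{(k)}(x)=f^{(k)}(x,\cdot)$ is even, $\lambda^\infty$-multilinear, supersymmetric ($f^{(k)}(x)(\dots,u,v,\dots)=(-1)^{|u||v|}f^{(k)}(x)(\dots,v,u,\dots)$ for homogeneous $u,v$), and $f^{(k)}(x)(E^k)\subset F$; (ii) $f^{(k)}$ extends $d^kf_R$; (iii) for $k\ge0$, $p\ge1$, $x\in U$, $a\in\underline E(\lambda^\infty\theta_p)$, $v_1,\dots,v_k\in E_\infty$: $f^{(k+1)}(x)(a,v_1,\dots,v_k)=(f^{(k)}(x+a)-f^{(k)}(x))(v_1,\dots,v_k)$. *)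

From HB Require Import structures.
From mathcomp Require Import all_boot all_order all_algebra finmap.
From mathcomp Require Import all_classical topology function_spaces.
Set Implicit Arguments. Unset Strict Implicit. Unset Printing Implicit Defensive.
Import GRing.Theory.
Local Open Scope classical_set_scope.
Local Open Scope ring_scope.

(* Carrier structures: a commutative unital ring with a topology, and an     *)
(* R-module with a topology.  The axioms (continuity of the operations, ...) *)
(* are imposed as explicit hypotheses below.                                 *)
HB.structure Definition FiltAddMagma := {M of Algebra.BaseAddMagma M & Filtered M M}.
HB.structure Definition TopNmod := {M of GRing.Nmodule M & Topological M}.
HB.structure Definition TopZmod := {M of GRing.Zmodule M & Topological M}.
#[short(type="topComUnitRingType")]
HB.structure Definition TopComUnitRing := {R of GRing.ComUnitRing R & Topological R}.
#[short(type="topLmodType")]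
HB.structure Definition TopLmodule (R : pzRingType) :=
  {M of GRing.Lmodule R M & Topological M}.

Definition top_ring (R : topComUnitRingType) : Prop :=
  [/\ continuous (fun p : R * R => p.1 + p.2),
      continuous (fun x : R => - x) &
      continuous (fun p : R * R => p.1 * p.2)].

(* A (unital) ring is a Q-algebra iff every positive integer is invertible. *)
Definition Q_algebra (R : topComUnitRingType) : Prop :=
  forall n : nat, (n.+1)%:R \is a @GRing.unit R.

Definition top_module (R : topComUnitRingType) (M : topLmodType R) : Prop :=
  continuous (fun p : M * M => p.1 + p.2) /\
  continuous (fun p : R * M => p.1 *: p.2).

Definition k_omega_open (T : topologicalType) (W : set T) : Prop :=
  open W /\
  exists K : nat -> set T,
    [/\ (forall n, compact (K n)),
        (forall n, K n `<=` K n.+1),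
        W = \bigcup_n K n &
        (forall A : set T, A `<=` W ->
           (forall n, exists B : set T, open B /\ A `&` K n = B `&` K n) ->
           open A)].

Definition locally_k_omega (T : topologicalType) : Prop :=
  hausdorff_space T /\ forall x : T, exists W : set T, W x /\ k_omega_open W.

(* E = E0 (+) E1 in TopSMod^lko_R : a Hausdorff graded topological R-module   *)
(* (topologically the product E0 * E1) which is locally k_omega.             *)
Definition TopSMod_lko (R : topComUnitRingType) (E0 E1 : topLmodType R) : Prop :=
  [/\ top_module E0, top_module E1 & locally_k_omega (E0 * E1)%type].

(* The odd generators theta_p are indexed by p : nat (theta_0, theta_1, ...; *)
(* i.e. the paper's theta_{p+1}).  A basis element theta_I, I a finite subset *)
(* of nat, is theta_{i1} ... theta_{im} with i1 < ... < im.                   *)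
(* An element of E (x) lambda^infty is a family (v I)_I of elements of E with *)
(* v I = 0 for all I not contained in {0,..,N-1} for some N, meaning         *)
(* sum_I (v I) theta_I.                                                       *)

Section Grassmann.
Variable R : topComUnitRingType.

(* families of coefficients (possibly not finitely supported) *)
Definition lam := {fset nat} -> R.
Definition superT (E0 E1 : topLmodType R) := {fset nat} -> (E0 * E1)%type.

Definition fin_supp (T : zmodType) (v : {fset nat} -> T) : Prop :=
  exists N : nat, forall I : {fset nat}, ~~ all (fun i => (i < N)%N) I -> v I = 0.

(* theta_I theta_J = sgn I J theta_{I u J} for disjoint I, J *)
Definition gsign (I J : {fset nat}) : R :=
  (-1) ^+ (\sum_(i <- I) \sum_(j <- J) (j < i)%N)%N.

Fixpoint fsubsets (s : seq nat) : seq {fset nat} :=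
  match s with
  | [::] => [:: fset0]
  | k :: s' => fsubsets s' ++ [seq fsetU (fset1 k) J | J <- fsubsets s']
  end.

Variables E0 E1 : topLmodType R.

(* right action of lambda on E (x) lambda:                                   *)
(* (sum_I v_I theta_I)(sum_J a_J theta_J) = sum_K (sum_{J c K} sgn(K\J,J)     *)
(*   a_J v_{K\J}) theta_K                                                     *)
Definition ract (v : superT E0 E1) (a : lam) : superT E0 E1 :=
  fun K => \sum_(J <- fsubsets K) (gsign (fsetD K J) J * a J) *: v (fsetD K J).

(* v is homogeneous of parity d: the coefficient of theta_I lies in         *)
(* E_{d + |I| mod 2}                                                          *)
Definition shom (d : bool) (v : superT E0 E1) : Prop :=
  forall I : {fset nat},
    if odd #|` I| (+) d then (v I).1 = 0 else (v I).2 = 0.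

Definition lhom (d : bool) (a : lam) : Prop :=
  forall I : {fset nat}, odd #|` I| != d -> a I = 0.

Definition Elam (v : superT E0 E1) : Prop := fin_supp v.
Definition Einf (v : superT E0 E1) : Prop := fin_supp v /\ shom false v.
Definition Einf_plus (v : superT E0 E1) : Prop := Einf v /\ v fset0 = 0.
Definition Etheta (p : nat) (v : superT E0 E1) : Prop :=
  Einf v /\ forall I : {fset nat}, p \notin I -> v I = 0.

Definition eps (v : superT E0 E1) : (E0 * E1)%type := v fset0.
(* E (resp. E_0) as the subspace of elements supported on theta_emptyset *)
Definition embE (e : (E0 * E1)%type) : superT E0 E1 :=
  fun I => if I == fset0 then e else 0.
Definition emb0 (e : E0) : superT E0 E1 := embE (e, 0).

End Grassmann.

(* Bertram--Gloeckner--Neeb differential calculus over the topological ring  *)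
(* R, for maps into a fixed topological R-module Y, on domains X given with  *)
(* their addition and scalar multiplication.                                 *)

Section BGN.
Variables (R : topComUnitRingType) (Y : topLmodType R).

Definition bgn_U1 (X : Type) (addX : X -> X -> X) (scX : R -> X -> X)
  (U : set X) : set (X * X * R)%type :=
  [set p | U p.1.1 /\ U (addX p.1.1 (scX p.2 p.1.2))].

Definition bgn_C1_witness (X : topologicalType) (addX : X -> X -> X)
  (scX : R -> X -> X) (U : set X) (g : X -> Y) (g1 : (X * X * R)%type -> Y) :=
  {within bgn_U1 addX scX U, continuous g1} /\
  forall (x v : X) (t : R), U x -> U (addX x (scX t v)) ->
    g (addX x (scX t v)) - g x = t *: g1 (x, v, t).

Fixpoint bgn_C (k : nat) (X : topologicalType) (addX : X -> X -> X)
  (scX : R -> X -> X) (U : set X) (g : X -> Y) {struct k} : Prop :=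
  match k with
  | 0 => {within U, continuous g}
  | k'.+1 => {within U, continuous g} /\
      exists g1 : (X * X * R)%type -> Y,
        bgn_C1_witness addX scX U g g1 /\
        @bgn_C k' ((X * X * R)%type : topologicalType)
          (fun p q => (addX p.1.1 q.1.1, addX p.1.2 q.1.2, p.2 + q.2))
          (fun r p => (scX r p.1.1, scX r p.1.2, r * p.2))
          (bgn_U1 addX scX U) g1
  end.

Variable X : topLmodType R.

Definition bgn_smooth (U : set X) (g : X -> Y) : Prop :=
  open U /\ forall k, bgn_C k +%R *:%R U g.

(* dg(x)(v) = g^[1](x, v, 0) (independent of the choice of g^[1] when the   *)
(* units of R are dense and Y is Hausdorff) *)
Definition bgn_d (U : set X) (g : X -> Y) (x v : X) : Y :=
  match pselect (exists g1, bgn_C1_witness +%R *:%R U g g1) with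
  | left H => (projT1 (cid H)) (x, v, 0)
  | right _ => 0
  end.

Fixpoint bgn_dk (U : set X) (g : X -> Y) (k : nat) : X -> ('I_k -> X) -> Y :=
  match k with
  | 0 => fun x _ => g x
  | k'.+1 => fun x (w : 'I_k'.+1 -> X) =>
      bgn_d U (fun z => @bgn_dk U g k' z (fun i : 'I_k' => w (widen_ord (leqnSn k') i)))
            x (w ord_max)
  end.

End BGN.

Section Smooth.
Variables (R : topComUnitRingType) (E0 E1 F0 F1 : topLmodType R).
Local Notation ET := (superT E0 E1).
Local Notation FT := (superT F0 F1).

Definition dewitt_open (U : set ET) : Prop :=
  exists V : set E0, open V /\ forall x, U x <-> (Einf x /\ V (eps x).1).

Definition dewitt_continuous (U : set ET) (f : ET -> FT) : Prop :=
  forall W : set F0, open W ->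
    exists V : set E0, open V /\
      forall x, U x -> (W (eps (f x)).1 <-> V (eps x).1).

Definition dewitt_continuous_k (k : nat) (U : set ET)
  (g : ET -> ('I_k -> ET) -> FT) : Prop :=
  forall W : set (F0 * F1)%type, open W ->
    exists V : set (E0 * {ptws 'I_k -> (E0 * E1)%type})%type, open V /\
      forall x (v : 'I_k -> ET), U x -> (forall i, Elam (v i)) ->
        (W (eps (g x v)) <-> V ((eps x).1, (fun i => eps (v i)))).

Definition upd (T : Type) (k : nat) (v : 'I_k -> T) (i : 'I_k) (w : T) :=
  fun j : 'I_k => if j == i then w else v j.

Definition cons_arg (T : Type) (k : nat) (a : T) (v : 'I_k -> T) : 'I_k.+1 -> T :=
  fun j => if unlift ord0 j is Some j' then v j' else a.

Definition lam_multilinear_even (k : nat) (h : ('I_k -> ET) -> FT) : Prop :=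
  [/\
      (forall (v : 'I_k -> ET) (d : 'I_k -> bool),
         (forall i, Elam (v i) /\ shom (d i) (v i)) ->
         shom (odd (\sum_i d i)) (h v)),
      (forall (v : 'I_k -> ET) (i : 'I_k) u w, (forall j, Elam (v j)) -> Elam u -> Elam w ->
         h (upd v i (u + w)) = h (upd v i u) + h (upd v i w)),
      (forall (v : 'I_k -> ET) (i : 'I_k) (a : lam R) (da : bool) (d : 'I_k -> bool),
         (forall j, Elam (v j)) -> fin_supp a -> lhom da a ->
         (forall j : 'I_k, (i < j)%N -> shom (d j) (v j)) ->
         h (upd v i (ract (v i) a)) =
         (-1) ^+ (da * \sum_(j : 'I_k | (i < j)%N) d j)%N *: ract (h v) a),
      (forall (v : 'I_k -> ET) (i j : 'I_k) (du dv : bool),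
         nat_of_ord j = i.+1 -> (forall l, Elam (v l)) ->
         shom du (v i) -> shom dv (v j) ->
         h (upd (upd v i (v j)) j (v i)) = (-1) ^+ (du && dv) *: h v) &
      (forall e : 'I_k -> (E0 * E1)%type, forall I, I != fset0 ->
         h (fun i => embE (e i)) I = 0)].

Definition grounded (U : set ET) (f : ET -> FT) : Prop :=
  forall x0 : E0, U (emb0 E1 x0) -> exists y0 : F0, f (emb0 E1 x0) = emb0 F1 y0.

Definition U_R (U : set ET) : set E0 := [set x0 | U (emb0 E1 x0)].
Definition f_R (f : ET -> FT) (x0 : E0) : F0 := (eps (f (emb0 E1 x0))).1.

Definition lam_smooth (U : set ET) (f : ET -> FT)
  (fk : forall k : nat, ET -> ('I_k -> ET) -> FT) : Prop :=
  [/\ (forall x, U x -> Einf (f x)),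
      dewitt_continuous U f &
      bgn_smooth (U_R U) (f_R f)] /\
  [/\
      (forall x (v : 'I_0 -> ET), U x -> fk 0 x v = f x),
      (forall k, (0 < k)%N ->
         [/\ (forall x (v : 'I_k -> ET), U x -> (forall i, Elam (v i)) ->
                Elam (fk k x v)),
             dewitt_continuous_k U (fk k) &
             forall x, U x -> lam_multilinear_even (fk k x)]),
      (forall k, (0 < k)%N -> forall (x0 : E0) (w : 'I_k -> E0), U_R U x0 ->
         fk k (emb0 E1 x0) (fun i => emb0 E1 (w i)) =
         emb0 F1 (bgn_dk (U_R U) (f_R f) x0 w)) &
      (forall k (p : nat) x a (v : 'I_k -> ET), U x -> Etheta p a ->
         (forall i, Einf (v i)) ->
         fk k.+1 x (cons_arg a v) = fk k (x + a) v - fk k x v)].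

End Smooth.

From HB Require Import structures.
From mathcomp Require Import all_boot all_order all_algebra finmap.
From mathcomp Require Import all_classical topology function_spaces.
From mathcomp Require Import zify.
Set Implicit Arguments. Unset Strict Implicit. Unset Printing Implicit Defensive.
Import GRing.Theory.
Local Open Scope classical_set_scope.
Local Open Scope ring_scope.

(* Induction on the number of odd generators that occur in [y].  Write
   [y = y' + a] with [a] divisible by the last generator [theta_n].  Property
   (iii) gives [f^(k)(x + a) = f^(k)(x) + f^(k+1)(x)(a, -)], and since
   [theta_n^2 = 0], multilinearity and supersymmetry give
   [f^(k+1)(x)(y' + a, ...) = f^(k+1)(x)(y', ...) + (k+1) f^(k+1)(x)(a, y', ...)].
   The induction hypothesis at [x] and at [x + a] then yields the expansion at
   [y] after shifting the summation index. *)

Lemma mem_fsubsets (s : seq nat) (J : {fset nat}) x :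
  J \in fsubsets s -> x \in J -> x \in s.
Proof.
elim: s J => [|k s IH] J /=; first by rewrite inE => /eqP ->; rewrite in_fset0.
rewrite mem_cat in_cons => /orP [/IH xs /xs -> | /mapP [J' /IH xs ->]].
  by rewrite orbT.
by rewrite in_fsetU in_fset1 => /orP [-> // | /xs ->]; rewrite orbT.
Qed.

Lemma count_fset0_fsubsets (s : seq nat) :
  count (fun J => J == fset0) (fsubsets s) = 1%N.
Proof.
elim: s => [|k s IH] //=; rewrite count_cat IH count_map.
rewrite (@eq_count _ _ pred0) ?count_pred0 // => J /=.
by apply/negP => /eqP /fsetP /(_ k); rewrite !inE eqxx.
Qed.

Lemma count_fset1_fsubsets (s : seq nat) p : uniq s ->
  count (fun J => J == fset1 p) (fsubsets s) = (p \in s).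
Proof.
elim: s => [_ | k s IH /andP [ks us]] /=.
  by rewrite addn0; case: eqP => // /fsetP /(_ p); rewrite !inE eqxx.
rewrite count_cat IH // count_map in_cons.
have [->|pk] := eqVneq p k; last first.
  rewrite (@eq_count _ _ pred0) ?count_pred0 ?addn0 // => J /=.
  by apply/negP => /eqP /fsetP /(_ k); rewrite !inE eqxx eq_sym (negbTE pk).
rewrite (negbTE ks) add0n /= -(count_fset0_fsubsets s).
apply: eq_in_count => J HJ /=; apply/eqP/eqP => [/fsetP JE | ->]; last by rewrite fsetU0.
apply/fsetP => x; rewrite inE; apply/negbTE/negP => xJ.
have := JE x; rewrite !inE xJ orbT => /esym /eqP xk.
by move: ks; rewrite -xk (mem_fsubsets HJ xJ).
Qed.

Section Theta.
Variable R : topComUnitRingType.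

Definition theta (p : nat) : lam R := fun J => if J == fset1 p then 1 else 0.

Lemma fin_supp_theta p : fin_supp (theta p).
Proof.
exists p.+1 => I; rewrite /theta; case: eqP => [->|//].
by move=> /allPn [x]; rewrite in_fset1 => /eqP ->; rewrite ltnSn.
Qed.

Lemma lhom_theta p : lhom true (theta p).
Proof. by move=> I; rewrite /theta; case: (I =P fset1 p) => [->|//]; rewrite cardfs1.
Qed.

Variables G0 G1 : topLmodType R.

Lemma ract_theta (v : superT G0 G1) p K :
  ract v (theta p) K =
  if p \in K then gsign R (K `\ p)%fset (fset1 p) *: v (K `\ p)%fset else 0.
Proof.
rewrite /ract (eq_bigr (fun J => if J == fset1 p then
    gsign R (K `\ p)%fset (fset1 p) *: v (K `\ p)%fset else 0)); last first.
  by move=> J _; rewrite /theta; case: eqP => [->|_]; rewrite ?mulr1 ?mulr0 ?scale0r.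
rewrite -big_mkcond big_const_seq count_fset1_fsubsets ?fset_uniq //.
by case: (p \in K); rewrite /= ?addr0.
Qed.

Lemma ract_theta_theta (v : superT G0 G1) p :
  ract (ract v (theta p)) (theta p) = 0.
Proof.
by apply/funext => K; rewrite ract_theta; case: ifP; rewrite // ract_theta fsetD11 scaler0.
Qed.

Lemma fin_supp_add (T : zmodType) (u v : {fset nat} -> T) :
  fin_supp u -> fin_supp v -> fin_supp (u + v).
Proof.
move=> [N1 H1] [N2 H2]; exists (maxn N1 N2) => I HI.
have notin N : (N <= maxn N1 N2)%N -> ~~ all (fun i => (i < N)%N) I.
  move=> HN; apply: contra HI => /allP IN; apply/allP => x /IN xN.
  exact: leq_trans xN HN.
by rewrite addrfctE H1 ?H2 ?addr0 ?notin ?leq_maxl ?leq_maxr.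
Qed.

Lemma Einf_add (u v : superT G0 G1) : Einf u -> Einf v -> Einf (u + v).
Proof.
move=> [fu hu] [fv hv]; split; first exact: fin_supp_add.
by move=> I; move: (hu I) (hv I); case: ifP => _ /= -> ->; rewrite addr0.
Qed.

Lemma Etheta_ract p (a : superT G0 G1) : Etheta p a ->
  exists b : superT G0 G1, fin_supp b /\ a = ract b (theta p).
Proof.
move=> [[[N HN] _] Ha].
exists (fun I => if p \in I then 0 else gsign R I (fset1 p) *: a (p |` I)%fset).
split.
  exists N => I HI; case: ifP => // _; rewrite HN ?scaler0 //.
  apply: contra HI => /allP IN; apply/allP => x xI; apply: IN.
  by rewrite in_fsetU xI orbT.
apply/funext => K; rewrite ract_theta; case: ifP => pK; last by rewrite Ha // pK.
by rewrite fsetD11 fsetD1K // /gsign signrZK.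
Qed.

End Theta.

Section Update.
Variables (T : Type) (n : nat).
Implicit Types (v : 'I_n -> T) (i j : 'I_n).

Lemma upd_eq v i x : upd v i x i = x.
Proof. by rewrite /upd eqxx. Qed.

Lemma upd_neq v i j x : j != i -> upd v i x j = v j.
Proof. by rewrite /upd => /negbTE ->. Qed.

Lemma upd_id v i : upd v i (v i) = v.
Proof. by apply/funext => j; rewrite /upd; case: eqP => // ->. Qed.

Lemma upd_upd v i x y : upd (upd v i x) i y = upd v i y.
Proof. by apply/funext => j; rewrite /upd; case: eqP. Qed.

End Update.

Section Multilinear.
Variables (R : topComUnitRingType) (E0 E1 F0 F1 : topLmodType R).
Local Notation ET := (superT E0 E1).
Local Notation FT := (superT F0 F1).
Variables (n : nat) (h : ('I_n -> ET) -> FT).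
Hypothesis hh : lam_multilinear_even h.

Lemma multilinear_add (v : 'I_n -> ET) i (u w : ET) :
  (forall j, Einf (v j)) -> Einf u -> Einf w ->
  h (upd v i (u + w)) = h (upd v i u) + h (upd v i w).
Proof.
move=> Ev Eu Ew; case: hh => _ hadd _ _ _.
by apply: hadd => [j||]; [case: (Ev j) | case: Eu | case: Ew].
Qed.

Lemma multilinear_swap (v : 'I_n -> ET) (i j : 'I_n) :
  nat_of_ord j = i.+1 -> (forall l, Einf (v l)) ->
  h (upd (upd v i (v j)) j (v i)) = h v.
Proof.
move=> ji Ev; case: hh => _ _ _ hswap _.
rewrite (hswap v i j false false ji) ?expr0 ?scale1r //.
- by move=> l; case: (Ev l).
- by case: (Ev i).
- by case: (Ev j).
Qed.

Lemma multilinear_ract_theta p (b : ET) (v : 'I_n -> ET) (i : 'I_n) :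
  (forall j, Elam (v j)) -> (forall j : 'I_n, (i < j)%N -> shom false (v j)) ->
  v i = b -> h (upd v i (ract b (theta R p))) = ract (h v) (theta R p).
Proof.
move=> Lv Sv <-; case: hh => _ _ hract _ _.
rewrite (hract v i (theta R p) true (fun _ => false) Lv (fin_supp_theta R p)
  (lhom_theta R p) Sv).
by rewrite big1 // muln0 expr0 scale1r.
Qed.

(* Pull [theta_p] out of both slots ([a = b theta_p]) and use [theta_p^2 = 0]. *)
Lemma multilinear_Etheta_twice p (a : ET) (v : 'I_n -> ET) (i l : 'I_n) :
  Etheta p a -> (i < l)%N -> v i = a -> v l = a -> (forall j, Einf (v j)) ->
  h v = 0.
Proof.
move=> Ea il vi vl Ev.
have [b [fb ab]] := Etheta_ract Ea.
have li : l != i by rewrite neq_ltn il orbT.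
have Lv j : Elam (v j) by case: (Ev j).
have Sv j : shom false (v j) by case: (Ev j).
have pull_i : h v = ract (h (upd v i b)) (theta R p).
  rewrite -(@multilinear_ract_theta p b (upd v i b) i) ?upd_eq //
    -?ab ?upd_upd -?vi ?upd_id //.
  - by move=> j; rewrite /upd; case: ifP => _ //; apply: Lv.
  - by move=> j ij; rewrite upd_neq // neq_ltn ij orbT.
have pull_l : h (upd v i b) = ract (h (upd (upd v i b) l b)) (theta R p).
  rewrite -(@multilinear_ract_theta p b (upd (upd v i b) l b) l) ?upd_eq // -?ab ?upd_upd.
  - by rewrite -vl -(upd_neq v b li) upd_id.
  - by move=> j; rewrite /upd; case: ifP => _ //; case: ifP => _ //; apply: Lv.
  - move=> j lj; rewrite !upd_neq //; last by rewrite neq_ltn lj orbT.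
    by rewrite neq_ltn (ltn_trans il lj) orbT.
by rewrite pull_i pull_l ract_theta_theta.
Qed.

End Multilinear.

Section Slots.
Variables (T : zmodType) (n : nat) (y a : T).

(* Argument vectors interpolating between [(y, ..., y)] and [(y + a, ..., y + a)]. *)
Definition a_at m : 'I_n -> T := fun i => if i == m :> nat then a else y.
Definition ya_below m : 'I_n -> T := fun i => if (i < m)%N then y + a else y.
Definition a_at_ya_below m m' : 'I_n -> T :=
  fun i => if i == m :> nat then a else ya_below m' i.

Lemma swap_a_at m (i j : 'I_n) : nat_of_ord i = m -> nat_of_ord j = m.+1 ->
  upd (upd (a_at m) i (a_at m j)) j (a_at m i) = a_at m.+1.
Proof.
move=> im jm; apply/funext => l; rewrite /upd /a_at -!(inj_eq val_inj) /= im jm.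
by do ![case: ifP => ?] => //; lia.
Qed.

Lemma ya_belowS m (i : 'I_n) : nat_of_ord i = m ->
  ya_below m.+1 = upd (ya_below m) i (y + a).
Proof.
move=> im; apply/funext => l; rewrite /upd /ya_below -(inj_eq val_inj) /= im.
by do ![case: ifP => ?] => //; lia.
Qed.

Lemma a_at_ya_belowS m m' (i : 'I_n) : nat_of_ord i = m' -> (m' < m)%N ->
  a_at_ya_below m m'.+1 = upd (a_at_ya_below m m') i (y + a).
Proof.
move=> im' m'm; apply/funext => l.
rewrite /upd /a_at_ya_below /ya_below -(inj_eq val_inj) /= im'.
by do ![case: ifP => ?] => //; lia.
Qed.

Lemma upd_a_at_ya_below m m' (i : 'I_n) : nat_of_ord i = m' -> (m' < m)%N ->
  upd (a_at_ya_below m m') i y = a_at_ya_below m m'.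
Proof.
move=> im' m'm; apply/funext => l.
rewrite /upd /a_at_ya_below /ya_below -(inj_eq val_inj) /= im'.
by do ![case: ifP => ?] => //; lia.
Qed.

Lemma upd_ya_below_a m (i : 'I_n) : nat_of_ord i = m ->
  upd (ya_below m) i a = a_at_ya_below m m.
Proof.
move=> im; apply/funext => l.
rewrite /upd /a_at_ya_below /ya_below -(inj_eq val_inj) /= im.
by do ![case: ifP => ?] => //; lia.
Qed.

Lemma upd_ya_below_y m (i : 'I_n) : nat_of_ord i = m ->
  upd (ya_below m) i y = ya_below m.
Proof.
move=> im; apply/funext => l; rewrite /upd /ya_below -(inj_eq val_inj) /= im.
by do ![case: ifP => ?] => //; lia.
Qed.

End Slots.

Section Expansion.
Variables (R : topComUnitRingType) (E0 E1 F0 F1 : topLmodType R).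
Local Notation ET := (superT E0 E1).
Local Notation FT := (superT F0 F1).
Variables (n : nat) (h : ('I_n -> ET) -> FT).
Hypothesis hh : lam_multilinear_even h.
Variables (p : nat) (y a : ET).
Hypotheses (Ey : Einf y) (Ea : Etheta p a).

Let Einf_a : Einf a. Proof. by case: Ea. Qed.
Let Einf_a_at m (i : 'I_n) : Einf (a_at y a m i).
Proof. by rewrite /a_at; case: ifP. Qed.
Let Einf_ya_below m (i : 'I_n) : Einf (ya_below y a m i).
Proof. by rewrite /ya_below; case: ifP => // _; apply: Einf_add. Qed.
Let Einf_a_at_ya_below m m' (i : 'I_n) : Einf (a_at_ya_below y a m m' i).
Proof. by rewrite /a_at_ya_below; case: ifP. Qed.

Lemma multilinear_a_at m : (m < n)%N -> h (a_at y a m) = h (a_at y a 0).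
Proof.
elim: m => [//|m IH] mn; have mn' := ltnW mn.
rewrite -(@swap_a_at _ _ y a m (Ordinal mn') (Ordinal mn)) //.
by rewrite multilinear_swap // IH.
Qed.

Lemma multilinear_a_at_ya_below m m' : (m < n)%N -> (m' <= m)%N ->
  h (a_at_ya_below y a m m') = h (a_at y a m).
Proof.
move=> mn; elim: m' => [_ | m' IH m'm].
  by congr h; apply/funext => i; rewrite /a_at_ya_below /ya_below ltn0.
have m'n : (m' < n)%N by apply: ltn_trans mn.
rewrite (@a_at_ya_belowS _ _ y a m m' (Ordinal m'n)) // (multilinear_add hh) //.
rewrite (@upd_a_at_ya_below _ _ y a m m' (Ordinal m'n)) // IH ?(ltnW m'm) //.
rewrite (multilinear_Etheta_twice hh Ea
  (v := upd (a_at_ya_below y a m m') (Ordinal m'n) a) (i := Ordinal m'n) (l := Ordinal mn)).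
- by rewrite addr0.
- exact: m'm.
- by rewrite upd_eq.
- by rewrite upd_neq /a_at_ya_below ?eqxx // -(inj_eq val_inj) /= gtn_eqF.
- by move=> j; rewrite /upd; case: ifP.
Qed.

Lemma multilinear_ya_below m : (m <= n)%N ->
  h (ya_below y a m) = h (fun _ => y) + m%:R *: h (a_at y a 0).
Proof.
elim: m => [_ | m IH mn].
  by rewrite scale0r addr0; congr h; apply/funext => i; rewrite /ya_below ltn0.
rewrite (@ya_belowS _ _ y a m (Ordinal mn)) // (multilinear_add hh) //.
rewrite (@upd_ya_below_y _ _ y a m (Ordinal mn)) //.
rewrite (@upd_ya_below_a _ _ y a m (Ordinal mn)) //.
rewrite multilinear_a_at_ya_below // multilinear_a_at // IH ?(ltnW mn) //.
by rewrite [in RHS]mulrSr scalerDl scale1r addrA.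
Qed.

Lemma multilinear_expand :
  h (fun _ => y + a) = h (fun _ => y) + n%:R *: h (a_at y a 0).
Proof.
rewrite -multilinear_ya_below //; congr h; apply/funext => i.
by rewrite /ya_below ltn_ord.
Qed.

End Expansion.

Definition supp_below (T : zmodType) (n : nat) (v : {fset nat} -> T) : Prop :=
  forall I : {fset nat}, ~~ all (fun i => (i < n)%N) I -> v I = 0.

Lemma supp_below0 (T : zmodType) (v : {fset nat} -> T) :
  supp_below 0 v -> v fset0 = 0 -> v = 0.
Proof.
move=> v0 vI0; apply/funext => I; have [->//|/fset0Pn [i iI]] := eqVneq I fset0.
by apply: v0; apply/allPn; exists i.
Qed.

Section Split.
Variables (R : topComUnitRingType) (E0 E1 : topLmodType R).
Local Notation ET := (superT E0 E1).

Lemma Einf_plus_split n (y : ET) : Einf_plus y -> supp_below n.+1 y ->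
  exists y' a : ET, [/\ y = y' + a, Einf_plus y', supp_below n y' & Etheta n a].
Proof.
move=> [[_ Sy] y0] Hy.
pose a : ET := fun I => if n \in I then y I else 0.
pose y' : ET := fun I => if n \in I then 0 else y I.
have fin_n (v : ET) : (forall I, v I != 0 -> v I = y I) -> fin_supp v.
  by move=> vy; exists n.+1 => I /Hy yI; have [//|/vy ->] := eqVneq (v I) 0.
have shom_n (v : ET) : (forall I, v I = 0 \/ v I = y I) -> shom false v.
  by move=> vy I; have := Sy I; case: (vy I) => ->; case: ifP.
exists y', a; split.
- by apply/funext => I; rewrite addrfctE /y' /a; case: ifP; rewrite ?add0r ?addr0.
- split; last by rewrite /y' in_fset0.
  split; first by apply: fin_n => I; rewrite /y'; case: ifP; rewrite ?eqxx.
  by apply: shom_n => I; rewrite /y'; case: ifP; [left | right].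
- move=> I HI; rewrite /y'; case: ifP => // nI; apply: Hy.
  apply: contra HI => /allP In; apply/allP => i iI; move: (In i iI).
  by rewrite ltnS leq_eqVlt => /orP [/eqP ni|//]; move: nI; rewrite -ni iI.
- split; last by move=> I /negbTE nI; rewrite /a nI.
  split; first by apply: fin_n => I; rewrite /a; case: ifP; rewrite ?eqxx.
  by apply: shom_n => I; rewrite /a; case: ifP; [right | left].
Qed.

Lemma dewitt_open_addr (U : set ET) (z a : ET) :
  dewitt_open U -> U z -> Einf_plus a -> U (z + a).
Proof.
move=> [V [_ UV]] /UV [Ez Vz] [Ea a0]; apply/UV; split; first exact: Einf_add.
by rewrite /eps addrfctE a0 addr0.
Qed.

End Split.

Section TaylorCoefficients.
Variables (R : topComUnitRingType) (V : lmodType R).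
Hypothesis hR_Q : Q_algebra R.

Lemma fact_unit k : (k`!%:R : R) \is a GRing.unit.
Proof. by rewrite -(prednK (fact_gt0 k)); apply: hR_Q. Qed.

Lemma invr_factS k : ((k.+1)`!%:R : R)^-1 * k.+1%:R = (k`!%:R)^-1.
Proof. by rewrite factS natrM invrM ?divrK ?fact_unit ?hR_Q. Qed.

Lemma taylor_sum_shift (g d : nat -> V) n : g n.+1 = 0 ->
  \sum_(k < n.+1) (k`!%:R)^-1 *: (g k + d k.+1) =
  \sum_(k < n.+2) (k`!%:R)^-1 *: (g k + k%:R *: d k).
Proof.
move=> gn; rewrite !(eq_bigr _ (fun k _ => scalerDr _ _ _)) !big_split /=.
rewrite [in RHS]big_ord_recr /= gn scaler0 addr0; congr (_ + _).
rewrite [in RHS]big_ord_recl /= scale0r scaler0 add0r.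
by apply: eq_bigr => k _; rewrite /bump /= add1n scalerA invr_factS.
Qed.

End TaylorCoefficients.

Section Taylor.
Variables (R : topComUnitRingType) (E0 E1 F0 F1 : topLmodType R).
Local Notation ET := (superT E0 E1).
Local Notation FT := (superT F0 F1).
Variables (U : set ET) (f : ET -> FT) (fk : forall k : nat, ET -> ('I_k -> ET) -> FT).
Arguments fk : clear implicits.
Hypotheses (hR_Q : Q_algebra R) (hU : dewitt_open U).
Hypothesis fk0 : forall x (v : 'I_0 -> ET), U x -> fk 0 x v = f x.
Hypothesis fk_multilinear :
  forall k, (0 < k)%N -> forall x, U x -> lam_multilinear_even (fk k x).
Hypothesis fk_diff : forall k (p : nat) x a (v : 'I_k -> ET), U x -> Etheta p a ->
  (forall i, Einf (v i)) -> fk k.+1 x (cons_arg a v) = fk k (x + a) v - fk k x v.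

Lemma fk_translate k p z a (v : 'I_k -> ET) : U z -> Etheta p a ->
  (forall i, Einf (v i)) -> fk k (z + a) v = fk k z v + fk k.+1 z (cons_arg a v).
Proof. by move=> Uz Ea Ev; rewrite (fk_diff Uz Ea Ev) addrCA subrr addr0. Qed.

Lemma fk_expand k p z (y a : ET) : U z -> Einf y -> Etheta p a ->
  fk k.+1 z (fun _ => y + a) =
  fk k.+1 z (fun _ => y) + k.+1%:R *: fk k.+1 z (cons_arg a (fun _ => y)).
Proof.
move=> Uz Ey Ea; rewrite (multilinear_expand (fk_multilinear _ Uz) Ey Ea) //.
congr (_ + _ *: fk _ _ _); apply/funext => i.
by rewrite /a_at /cons_arg; case: unliftP => [j|] ->.
Qed.

Lemma fk_zero k z : U z -> (0 < k)%N -> fk k z (fun _ => 0) = 0.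
Proof.
move=> Uz k0; case: (fk_multilinear k0 Uz) => _ hadd _ _ _.
have L0 : Elam (0 : ET) by exists 0%N.
have := hadd (fun _ => 0) (Ordinal k0) 0 0 (fun _ => L0) L0 L0.
have upd0 : upd (fun _ : 'I_k => 0 : ET) (Ordinal k0) 0 = (fun _ => 0).
  by apply/funext => j; rewrite /upd; case: ifP.
by rewrite addr0 upd0 => /esym/eqP; rewrite -subr_eq0 addrK => /eqP.
Qed.

Lemma taylor_supp_below n z y : U z -> Einf_plus y -> supp_below n y ->
  (forall k, (n < k)%N -> fk k z (fun _ => y) = 0) /\
  f (z + y) = \sum_(k < n.+1) (k`!%:R)^-1 *: fk k z (fun _ => y).
Proof.
elim: n z y => [|n IH] z y Uz Ey Sy.
  rewrite (supp_below0 Sy Ey.2) addr0 big_ord1 invr1 scale1r fk0 //.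
  by split=> // k; apply: fk_zero.
have [y' [a [-> Ey' Sy' Ea]]] := Einf_plus_split Ey Sy.
have Eza : Einf_plus a by split; [case: Ea | rewrite (Ea.2 fset0) ?in_fset0].
have Uza := dewitt_open_addr hU Uz Eza.
have [vanish_z _] := IH z y' Uz Ey' Sy'.
have [vanish_za taylor_za] := IH (z + a) y' Uza Ey' Sy'.
have Ey'i k (i : 'I_k) : Einf y' by case: Ey'.
split=> [[//|k] nk|].
  rewrite (fk_expand _ Uz Ey'.1 Ea) vanish_z ?(ltnW nk) // add0r.
  have := fk_translate Uz Ea (Ey'i k).
  by rewrite vanish_za // vanish_z // add0r => <-; rewrite scaler0.
rewrite addrCA addrC taylor_za.
pose d k := if k is k'.+1 then fk k'.+1 z (cons_arg a (fun _ : 'I_k' => y')) else 0.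
under eq_bigr => k _ do rewrite (fk_translate Uz Ea (Ey'i _)).
rewrite (@taylor_sum_shift _ _ hR_Q (fun k => fk k z (fun _ => y')) d n) ?vanish_z //.
apply: eq_bigr => -[[|k] hk] _ /=; first by rewrite scaler0 addr0 !fk0.
by rewrite (fk_expand _ Uz Ey'.1 Ea).
Qed.

End Taylor.

Theorem proposition4p5 (R : topComUnitRingType) (E0 E1 F0 F1 : topLmodType R)
  (hR_top : top_ring R) (hR_T2 : hausdorff_space R) (hR_Q : Q_algebra R)
  (hR_units : dense [set r : R | r \is a GRing.unit])
  (hR_lko : locally_k_omega R)
  (hE : TopSMod_lko E0 E1) (hF : TopSMod_lko F0 F1)
  (U : set (superT E0 E1)) (hU : dewitt_open U)
  (f : superT E0 E1 -> superT F0 F1)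
  (fk : forall k : nat, superT E0 E1 -> ('I_k -> superT E0 E1) -> superT F0 F1)
  (hf_ground : grounded U f) (hf_smooth : lam_smooth U f fk) :
  forall x y : superT E0 E1, U x -> Einf_plus y ->
    exists N : nat,
      (forall k : nat, (N <= k)%N -> fk k x (fun _ => y) = 0) /\
      f (x + y) = \sum_(k < N) (k`!%:R)^-1 *: fk k x (fun _ => y).
Proof.
move=> x y Ux Ey; case: hf_smooth => _ [fk0 fk_pos _ fk_diff].
have fk_multilinear k : (0 < k)%N -> forall z, U z -> lam_multilinear_even (fk k z).
  by move=> k0 z Uz; case: (fk_pos k k0) => _ _; apply.
have [[N supp_y] _] := Ey.1.
have [vanish taylor] := taylor_supp_below hR_Q hU fk0 fk_multilinear fk_diff Ux Ey supp_y.
by exists N.+1.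
Qed.
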